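(* Let $m$ be a positive integer with $3\mid 2^m+1$, $n=2m$, let $s$ be an integer with $\gcd(s,2^m+1)=1$, and let $a=\overline{a}\xi^k\in\mathbb{F}_{2^n}^*$ with $\overline{a}\in\mathbb{F}_{2^m}$ and $0\le k\le 2^m$. Define $f:\mathbb{F}_{2^n}\to\mathbb{F}_2$ by $f(0)=0$ and $$f(x)=\sum_{i=1}^{\frac{2^m+1}{3}-1}{\rm Tr}_1^n\big(ax^{(3i+s)(2^m-1)}\big).$$ Then $f$ is bent if and only if $$K_m(\overline{a})=3-\sum_{j=0}^{2}(-1)^{{\rm Tr}_1^n(a\xi^{j\frac{2^m+1}{3}})}.$$ Furthermore, if $f$ is bent, then $K_m(\overline{a})=0$ when ${\rm Tr}_1^n(a)={\rm Tr}_1^n(a\xi^{\frac{2^m+1}{3}})={\rm Tr}_1^n(a\xi^{2\frac{2^m+1}{3}})=0$, and $K_m(\overline{a})=4$ otherwise.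
   Context: ${\rm Tr}_k^t$ is the trace map from $\mathbb{F}_{2^t}$ to $\mathbb{F}_{2^k}$. $\xi$ is a fixed generator of the cyclic group $U=\{x\in\mathbb{F}_{2^n}:x^{2^m+1}=1\}$. $K_m(\beta)=\sum_{x\in\mathbb{F}_{2^m}}(-1)^{{\rm Tr}_1^m(\beta x+x^{2^m-2})}$. A function $f:\mathbb{F}_{2^n}\to\mathbb{F}_2$ is bent if $|W_f(\lambda)|^2=2^n$ for all $\lambda$, where $W_f(\lambda)=\sum_{x}(-1)^{f(x)+{\rm Tr}_1^n(\lambda x)}$. *)

From mathcomp Require Import all_boot all_order all_algebra all_field.
Set Implicit Arguments. Unset Strict Implicit. Unset Printing Implicit Defensive.
Import GRing.Theory Num.Theory.
Local Open Scope ring_scope.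

(* Tr_1^k(x) = sum_{i<k} x^(2^i)  (absolute trace of F_{2^k} when x is in F_{2^k}) *)
Definition trace (F : finFieldType) (k : nat) (x : F) : F :=
  \sum_(i < k) x ^+ (2 ^ i).

(* (-1)^y for y in the prime field F_2 = {0,1} of F *)
Definition sgn (F : finFieldType) (y : F) : int := if y == 0 then 1 else -1.

Definition walsh (F : finFieldType) (n : nat) (f : F -> F) (lam : F) : int :=
  \sum_(x : F) sgn (f x + trace n (lam * x)).

Definition bent (F : finFieldType) (n : nat) (f : F -> F) : Prop :=
  forall lam : F, (walsh n f lam) ^+ 2 = (2 ^ n)%:Z.

(* Kloosterman sum K_m(beta) = sum_{x in F_{2^m}} (-1)^(Tr_1^m(beta x + x^(2^m-2))),
   F_{2^m} being the subfield {x | x^(2^m) = x} of F *)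
Definition kloosterman (F : finFieldType) (m : nat) (beta : F) : int :=
  \sum_(x : F | x ^+ (2 ^ m) == x) sgn (trace m (beta * x + x ^+ (2 ^ m - 2))).

From mathcomp Require Import all_boot all_order all_algebra all_field.
From mathcomp Require Import zify ring.
Set Implicit Arguments. Unset Strict Implicit. Unset Printing Implicit Defensive.
Import GRing.Theory Num.Theory.
Local Open Scope ring_scope.

(* A function [f] with [f 0 = 0] that is invariant under multiplication by
   [F_(2^m)^*] has Walsh values [W_f(0) = 1 + (2^m - 1) S] and
   [W_f(l) = 1 - S +- 2^m] for [l != 0], where [S = sum_(u in U) (-1)^f(u)];
   for [m >= 2] it is thus bent iff [S = 1].  On [U] the sum defining our [f]
   is geometric in a cube root of unity: [f u = Tr(a v)] with
   [v = u^((2^m-1)s)], unless [v^3 = 1] where [f u = 0].  As [v] runs over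
   [U], this gives [S = 3 + sum_(v in U) (-1)^Tr(a v) - sum_(v^3 = 1) (-1)^Tr(a v)],
   and the classical identity [sum_(v in U) (-1)^Tr(abar v) = 1 - K_m(abar)],
   proved with the Gauss sum of the norm [x^(2^m+1)], turns [S = 1] into the
   Kloosterman condition.  The three traces [Tr(a w)], [w^3 = 1], add up to
   [0], so either all vanish or exactly two are [1]: [K_m(abar)] is [0] or [4]. *)

Section Char2.
Variable F : finFieldType.
Hypothesis charF : (2 \in [pchar F])%N.
Implicit Types x y : F.

Lemma sqrrD_char2 x y : (x + y) ^+ 2 = x ^+ 2 + y ^+ 2.
Proof. by rewrite sqrrD mulrn_pchar // addr0. Qed.

Lemma expr2nD i x y : (x + y) ^+ (2 ^ i) = x ^+ (2 ^ i) + y ^+ (2 ^ i).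
Proof.
elim: i => [|i IH]; first by rewrite !expr1.
by rewrite expnSr !exprM IH sqrrD_char2.
Qed.

Lemma traceD k x y : trace k (x + y) = trace k x + trace k y.
Proof. by rewrite /trace -big_split; apply: eq_bigr => i _; rewrite expr2nD. Qed.

Lemma trace0 k : trace k (0 : F) = 0.
Proof. by rewrite /trace big1 // => i _; rewrite expr0n expn_eq0. Qed.

Lemma trace_sum k I (r : seq I) (P : pred I) (G : I -> F) :
  trace k (\sum_(i <- r | P i) G i) = \sum_(i <- r | P i) trace k (G i).
Proof. exact: (big_morph (trace k) (traceD k) (trace0 k)). Qed.

Lemma sqr_sum I (r : seq I) (P : pred I) (G : I -> F) :
  (\sum_(i <- r | P i) G i) ^+ 2 = \sum_(i <- r | P i) G i ^+ 2.
Proof. exact: (big_morph (fun x : F => x ^+ 2) sqrrD_char2 (expr0n _ _)). Qed.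

Lemma trace_idem k x : x ^+ (2 ^ k) = x -> trace k x ^+ 2 = trace k x.
Proof.
move=> hx; apply: (addIr x); rewrite /trace sqr_sum.
have shift : x + \sum_(i < k) (x ^+ (2 ^ i)) ^+ 2 = \sum_(i < k.+1) x ^+ (2 ^ i).
  rewrite big_ord_recl expn0 expr1; congr (_ + _); apply: eq_bigr => i _.
  by rewrite -exprM -expnSr.
by rewrite addrC shift big_ord_recr /= hx.
Qed.

Lemma idem_eq01 y : y ^+ 2 = y -> y = 0 \/ y = 1.
Proof.
move=> h; have : y * (y - 1) = 0 by rewrite mulrBr mulr1 -expr2 h subrr.
by move/eqP; rewrite mulf_eq0 subr_eq0 => /orP[/eqP|/eqP]; [left|right].
Qed.

Lemma sgn0 : sgn (0 : F) = 1. Proof. by rewrite /sgn eqxx. Qed.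

Lemma sgnD y z : y ^+ 2 = y -> z ^+ 2 = z -> sgn (y + z) = sgn y * sgn z.
Proof.
move=> /idem_eq01[]-> /idem_eq01[]->; rewrite /sgn ?addr0 ?add0r ?eqxx ?oner_eq0 //=.
by rewrite addrr_pchar2 // eqxx.
Qed.

Lemma sgnD1 y : y ^+ 2 = y -> sgn (y + 1) = - sgn y.
Proof. by move=> hy; rewrite sgnD ?expr1n // /sgn oner_eq0 mulrN1. Qed.

Lemma sgn_sqr y : sgn y ^+ 2 = 1.
Proof. by rewrite /sgn; case: ifP. Qed.

Lemma sgn_sum3 y0 y1 y2 :
  y0 ^+ 2 = y0 -> y1 ^+ 2 = y1 -> y2 ^+ 2 = y2 -> y0 + y1 + y2 = 0 ->
  3 - (sgn y0 + sgn y1 + sgn y2) = if [&& y0 == 0, y1 == 0 & y2 == 0] then 0 else 4.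
Proof.
have two : (1 : F) + 1 = 0 := addrr_pchar2 charF 1.
move=> /idem_eq01[]-> /idem_eq01[]-> /idem_eq01[]-> /eqP;
by rewrite /sgn ?addr0 ?add0r ?two ?add0r ?eqxx ?oner_eq0.
Qed.

Lemma sum_expr_odd y d : y ^+ d = 1 -> odd d ->
  \sum_(1 <= i < d) y ^+ i = if y == 1 then 0 else 1.
Proof.
move=> yd od; case: (eqVneq y 1) => [->|y1].
  under eq_bigr do rewrite expr1n.
  rewrite sumr_const_nat; case: d yd od => // d _ /= ed.
  rewrite subSS subn0.
  have -> : d = (d./2 * 2)%N by rewrite -[LHS]odd_double_half (negbTE ed) add0n muln2.
  by rewrite natrM (pcharf0 charF) mulr0.
have d0 : (0 < d)%N by case: d yd od.
have : \sum_(i < d) y ^+ i = 0.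
  have := subrX1 y d; rewrite yd subrr => /esym /eqP; rewrite mulf_eq0 subr_eq0.
  by rewrite (negbTE y1) /= => /eqP.
rewrite -(big_mkord xpredT (fun i => y ^+ i)) /= (big_ltn d0) expr0 => /eqP.
by rewrite addr_eq0 oppr_pchar2 // => /eqP.
Qed.

Lemma exists_trace_neq0 k : (0 < k)%N -> (2 ^ k.-1 < #|F|)%N -> exists z : F, trace k z != 0.
Proof.
move=> k0 hk; pose p : {poly F} := \sum_(i < k) 'X^(2 ^ i).
have pE z : p.[z] = trace k z by rewrite horner_sum; apply: eq_bigr => i _; rewrite hornerXn.
have pn0 : p != 0.
  apply/eqP => /(congr1 (fun r : {poly F} => r`_(2 ^ k.-1))).
  have hk1 : (k.-1 < k)%N by rewrite prednK.
  rewrite coef_sum coef0 (bigD1 (Ordinal hk1)) //= coefXn eqxx big1 ?addr0.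
    by move/eqP; rewrite oner_eq0.
  move=> i /eqP hi; rewrite coefXn; case: eqP => // /eqP.
  by rewrite eqn_exp2l // => /eqP hi'; case: hi; apply: val_inj.
have szp : (size p <= (2 ^ k.-1).+1)%N.
  apply: leq_trans (size_sum _ _ _) _; apply/bigmax_leqP => i _.
  by rewrite size_polyXn ltnS leq_exp2l // -ltnS prednK.
case: (boolP [forall z : F, trace k z == 0]) => [/forallP hall|]; last first.
  by rewrite negb_forall => /existsP[z hz]; exists z.
have : (#|F| < size p)%N.
  rewrite cardE; apply: max_poly_roots pn0 _ (enum_uniq _).
  by apply/allP => z _; rewrite /root pE hall.
by move=> h; have := leq_trans h szp; rewrite ltnS leqNgt hk.
Qed.

End Char2.
Lemma int_eq_opp_eq0 (z : int) : z = - z -> z = 0.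
Proof. lia. Qed.

Section Subfield.
Variables (F : finFieldType) (m : nat).
Hypotheses (m_gt0 : (0 < m)%N) (cardF : #|F| = (2 ^ (2 * m))%N)
  (charF : (2 \in [pchar F])%N).

Local Notation q := (2 ^ m)%N.
Local Notation hq := (2 ^ m.-1)%N.
Local Notation Tn := (trace (2 * m)).
Local Notation Tm := (trace m).
Implicit Types x y t u c : F.

(* [inK] is the subfield [F_(2^m)], [inU] the group [U] of [(2^m+1)]-th roots of unity. *)
Definition inK x := x ^+ q == x.
Definition inU x := x ^+ q.+1 == 1.

Lemma q_double : q = (2 * hq)%N.
Proof. by rewrite -expnS prednK. Qed.

Lemma hq_gt0 : (0 < hq)%N. Proof. by rewrite expn_gt0. Qed.

Lemma q_gt1 : (1 < q)%N.
Proof. by rewrite q_double; have := hq_gt0; lia. Qed.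

Lemma q_pred_int : q%:Z - 1 = (q.-1)%:Z.
Proof. by have := q_gt1; lia. Qed.

Lemma q_sqr : (q * q)%N = (2 ^ (2 * m))%N.
Proof. by rewrite -expnD addnn -mul2n. Qed.

Lemma expr_qq x : x ^+ (q * q) = x.
Proof. by rewrite q_sqr -cardF expf_card. Qed.

Lemma expr_qq_pred x : x != 0 -> x ^+ (q * q).-1 = 1.
Proof.
move=> x0; apply: (mulIf x0); rewrite mul1r -exprSr prednK ?expr_qq //.
by rewrite muln_gt0; have := q_gt1; lia.
Qed.

Lemma Tn_idem x : Tn x ^+ 2 = Tn x.
Proof. by apply: trace_idem => //; rewrite -q_sqr expr_qq. Qed.

Lemma Tm_idem x : inK x -> Tm x ^+ 2 = Tm x.
Proof. by move=> /eqP hx; apply: trace_idem. Qed.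

Lemma Tn_split y : Tn y = Tm (y + y ^+ q).
Proof.
rewrite /trace mul2n -addnn big_split_ord /= -big_split; apply: eq_bigr => i _.
by rewrite expr2nD // expnD exprM.
Qed.

Lemma inKM x y : inK x -> inK y -> inK (x * y).
Proof. by rewrite /inK exprMn => /eqP-> /eqP->. Qed.
Lemma inKD x y : inK x -> inK y -> inK (x + y).
Proof. by rewrite /inK expr2nD // => /eqP-> /eqP->. Qed.
Lemma inK0 : inK 0. Proof. by rewrite /inK expr0n expn_eq0. Qed.
Lemma inK1 : inK 1. Proof. by rewrite /inK expr1n. Qed.
Lemma inKV x : inK x -> inK x^-1.
Proof. by rewrite /inK exprVn => /eqP->. Qed.
Lemma inKX x k : inK x -> inK (x ^+ k).
Proof. by rewrite /inK -exprM mulnC exprM => /eqP->. Qed.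
Lemma inK_addXq y : inK (y + y ^+ q).
Proof. by rewrite /inK expr2nD // -exprM expr_qq addrC. Qed.
Lemma inK_norm y : inK (y ^+ q.+1).
Proof. by rewrite /inK -exprM mulSn exprD expr_qq mulrC -exprS. Qed.

Lemma Tn_mulK t y : inK t -> Tn (t * y) = Tm (t * (y + y ^+ q)).
Proof. by move=> /eqP ht; rewrite Tn_split exprMn ht mulrDr. Qed.

Lemma Tn_K t : inK t -> Tn t = 0.
Proof.
by move=> ht; rewrite -[t]mulr1 Tn_mulK // expr1n addrr_pchar2 // mulr0 trace0.
Qed.

Lemma Tm_sqr z : inK z -> Tm (z ^+ 2) = Tm z.
Proof.
move=> hz; rewrite -[RHS](Tm_idem hz) /trace sqr_sum //; apply: eq_bigr => i _.
by rewrite -!exprM mulnC.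
Qed.

Lemma inK_expr_pred t : inK t -> t != 0 -> t ^+ q.-1 = 1.
Proof.
move=> /eqP ht t0; apply: (mulIf t0); rewrite mul1r -exprSr prednK //.
by rewrite expn_gt0.
Qed.

Lemma inUM x y : inU x -> inU y -> inU (x * y).
Proof. by rewrite /inU exprMn => /eqP-> /eqP->; rewrite mulr1. Qed.
Lemma inUV x : inU x -> inU x^-1.
Proof. by rewrite /inU exprVn => /eqP->; rewrite invr1. Qed.

Lemma inU_neq0 u : inU u -> u != 0.
Proof. by rewrite /inU; apply: contraTneq => ->; rewrite expr0n /= eq_sym oner_eq0. Qed.

Lemma inK_inU_eq1 x : inK x -> inU x -> x = 1.
Proof.
rewrite /inK /inU exprS => /eqP-> /eqP h.
have : (x + 1) ^+ 2 = 0 by rewrite sqrrD_char2 // expr2 h expr1n addrr_pchar2.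
by move/eqP; rewrite expf_eq0 /= addr_eq0 oppr_pchar2 // => /eqP.
Qed.

(* [hq] is [-1/2] modulo [q+1] and [x^(q-1) = u^(-2)] for [x = t u] with [t]
   in [K] and [u] in [U]; hence [polarU x] is the [U]-component of [x]. *)
Definition polarU x := x ^+ (q.-1 * hq).
Definition polarK x := x / polarU x.

Lemma polarU_inU x : x != 0 -> inU (polarU x).
Proof.
move=> x0; rewrite /inU /polarU -exprM mulnAC exprM.
have -> : (q.-1 * q.+1 = (q * q).-1)%N by have := q_gt1; nia.
by rewrite expr_qq_pred // expr1n.
Qed.

Lemma polarU_neq0 x : x != 0 -> polarU x != 0.
Proof. by move=> x0; apply/inU_neq0/polarU_inU. Qed.

Lemma polarK_inK x : x != 0 -> inK (polarK x).
Proof.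
move=> x0; have u0 := polarU_neq0 x0.
have uqV : (polarU x ^+ q)^-1 = polarU x.
  apply: (mulIf (expf_neq0 q u0)); rewrite mulVf ?expf_neq0 // mulrC -exprSr.
  exact/esym/eqP/polarU_inU.
rewrite /inK /polarK exprMn exprVn uqV; apply/eqP; apply: (mulIf u0).
rewrite divfK // -mulrA -expr2 /polarU -exprM -exprD -[RHS](expr_qq x).
by congr (_ ^+ _); rewrite q_double; have := hq_gt0; nia.
Qed.

Lemma polarU_mulK t u : inK t -> t != 0 -> inU u -> polarU (t * u) = u.
Proof.
move=> ht t0 hu; rewrite /polarU exprMn exprM inK_expr_pred // expr1n mul1r.
have -> : (q.-1 * hq = hq.-1 * q.+1 + 1)%N.
  by rewrite q_double; have := hq_gt0; nia.
by rewrite exprD [(hq.-1 * _)%N]mulnC exprM (eqP hu) expr1n mul1r expr1.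
Qed.

Lemma sum_polar (phi : F -> int) :
  \sum_(x | x != 0) phi x = \sum_(u | inU u) \sum_(t | inK t && (t != 0)) phi (t * u).
Proof.
rewrite (partition_big polarU inU) /=; last by move=> x; apply: polarU_inU.
apply: eq_bigr => u hu; have u0 := inU_neq0 hu.
rewrite (reindex_onto (fun t => t * u) (fun x => x / u)) /=; last first.
  by move=> x _; rewrite divfK.
apply: eq_bigl => t; rewrite mulfK // eqxx andbT mulf_eq0 negb_or u0 andbT.
case: (eqVneq t 0) => [->|t0] /=; first by rewrite andbF.
rewrite andbT; apply/eqP/idP => [h|ht]; last by rewrite polarU_mulK.
by have := polarK_inK (mulf_neq0 t0 u0); rewrite /polarK h mulfK.
Qed.

Lemma exists_Tn_eq1 : exists z : F, Tn z = 1.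
Proof.
have n_gt0 : (0 < 2 * m)%N by rewrite muln_gt0.
have [|z hz] := @exists_trace_neq0 F (2 * m) n_gt0.
  by rewrite cardF ltn_exp2l // prednK.
by exists z; case: (idem_eq01 (Tn_idem z)) hz => ->; rewrite ?eqxx.
Qed.

Lemma exists_Tm_eq1 : exists2 w : F, inK w & Tm w = 1.
Proof.
have [z hz] := exists_Tn_eq1; exists (z + z ^+ q); first exact: inK_addXq.
by rewrite -Tn_split.
Qed.

(* Both sums are changed into their opposites by a translation [t -> t + d]
   with [Tr(d c) = 1]. *)
Lemma sum_sgn_Tm c : inK c ->
  \sum_(t | inK t) sgn (Tm (t * c)) = if c == 0 then #|[pred t | inK t]|%:Z else 0.
Proof.
move=> hc; case: (eqVneq c 0) => [->|c0].
  under eq_bigr do rewrite mulr0 trace0 sgn0.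
  by rewrite sumr_const natz.
have [w hw hw1] := exists_Tm_eq1; set d := w / c.
have hd : inK d by apply: inKM => //; apply: inKV.
apply: int_eq_opp_eq0; rewrite {1}(reindex_inj (addIr d)) /= -sumrN.
rewrite (eq_bigl inK); last first.
  move=> t; apply/idP/idP => h; last exact: inKD.
  by rewrite -(addrK_pchar2 charF d t); apply: inKD.
apply: eq_bigr => t ht.
by rewrite mulrDl /d divfK // traceD // hw1 sgnD1 // Tm_idem // inKM.
Qed.

Lemma sum_sgn_Tn c : c != 0 -> \sum_x sgn (Tn (c * x)) = 0.
Proof.
move=> c0; have [w hw1] := exists_Tn_eq1; set d := w / c.
apply: int_eq_opp_eq0; rewrite {1}(reindex_inj (addIr d)) /= -sumrN.
apply: eq_bigr => t _.
by rewrite mulrDr /d mulrCA divff // mulr1 traceD // hw1 sgnD1 // Tn_idem.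
Qed.

Lemma sum_nonzero (g : F -> int) : \sum_(x | x != 0) g x = \sum_x g x - g 0.
Proof. by rewrite [X in _ = X - _](bigD1 0) //= addrAC subrr add0r. Qed.

Lemma sum_nonzero_K (g : F -> int) :
  \sum_(t | inK t && (t != 0)) g t = \sum_(t | inK t) g t - g 0.
Proof. by rewrite [X in _ = X - _](bigD1 0) ?inK0 //= addrAC subrr add0r. Qed.


(* The [if]: for [m = 1] the term [x^(2^m-2)] is [0^0 = 1] at [x = 0]. *)
Lemma kloostermanE c : inK c -> kloosterman m c =
  (if m == 1%N then -1 else 1) + \sum_(t | inK t && (t != 0)) sgn (Tm (c * t + t^-1)).
Proof.
move=> hc; rewrite /kloosterman (bigD1 0) /=; last exact: inK0.
congr (_ + _).
  rewrite mulr0 add0r expr0n; case: (eqVneq m 1%N) => [->|m1] /=.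
    by rewrite /trace big_ord1 expr1n /sgn oner_eq0.
  have -> : (2 ^ m - 2 == 0)%N = false.
    apply/negbTE; rewrite subn_eq0 -ltnNge.
    by rewrite -[X in (X < _)%N](expn1 2) ltn_exp2l //; lia.
  by rewrite trace0 sgn0.
apply: eq_bigr => x /andP[hx x0]; congr (sgn (Tm (_ + _))).
apply: (mulIf x0); rewrite mulVf // -exprSr -(inK_expr_pred hx x0); congr (_ ^+ _).
by have := q_gt1; lia.
Qed.

Lemma inU_exprz u z : inU u -> inU (u ^ z).
Proof. by move=> hu; rewrite /inU exprnP exprzAC -exprnP (eqP hu) exp1rz. Qed.

Lemma inU_exprzD_mul u z j : inU u -> u ^ (z + (q.+1)%:Z * j) = u ^ z.
Proof.
move=> hu; rewrite exprzDr ?unitfE ?inU_neq0 // -exprz_exp -exprnP (eqP hu).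
by rewrite exp1rz mulr1.
Qed.

Lemma reindex_inU_exprz (G : F -> int) (e r j : int) :
  e * r = 1 + (q.+1)%:Z * j ->
  \sum_(u | inU u) G (u ^ e) = \sum_(v | inU v) G v.
Proof.
move=> er.
rewrite [RHS](reindex_onto (fun u => u ^ e) (fun v => v ^ r)) /=; last first.
  by move=> v hv; rewrite exprz_exp mulrC er inU_exprzD_mul // expr1z.
apply: eq_bigl => u; apply/idP/andP => [hu|[h1 /eqP h2]]; last first.
  by rewrite -h2; apply: inU_exprz.
split; first exact: inU_exprz.
by rewrite exprz_exp er inU_exprzD_mul // expr1z.
Qed.

Section RootOfUnity.
Variable xi : F.
Hypothesis xi_prim : (q.+1).-primitive_root xi.

Lemma cardU : #|[pred u | inU u]| = q.+1.
Proof.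
have inj : injective (fun i : 'I_q.+1 => xi ^+ i).
  move=> i j /eqP; rewrite (eq_prim_root_expr xi_prim) !modn_small // => /eqP.
  exact: val_inj.
rewrite -[RHS]card_ord -(card_image inj); apply: eq_card => u; rewrite inE.
apply/idP/imageP => [hu|[i _ ->]].
  by have [i ->] := prim_rootP xi_prim (eqP hu); exists i.
by rewrite /inU -exprM mulnC exprM (prim_expr_order xi_prim) expr1n.
Qed.

Lemma sum_inU_const (c : int) : \sum_(u | inU u) c = c * (q.+1)%:Z.
Proof.
rewrite sumr_const -mulr_natr natz; congr (_ * _%:Z).
by rewrite -[RHS]cardU; apply: eq_card.
Qed.

Lemma cardK : #|[pred t | inK t]| = q.
Proof.
have cardFx : #|[pred x : F | x != 0]| = (q * q).-1.
  rewrite q_sqr -cardF -(cardC (pred1 (0 : F))) card1 add1n /=.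
  by apply: eq_card => x; rewrite !inE.
have cardKx : #|[pred t | inK t]| = #|(fun t => inK t && (t != 0))|.+1.
  rewrite (cardD1 0) inE inK0 /=; congr (_.+1).
  by apply: eq_card => t; rewrite !inE andbC.
have := sum_polar (fun _ => 1).
rewrite [LHS]sumr_const; under [RHS]eq_bigr do rewrite sumr_const.
rewrite sum_inU_const !natz -PoszM => /eqP; rewrite eqz_nat cardFx => /eqP.
rewrite cardKx; set x := #|_|; move=> h; have := q_gt1; nia.
Qed.

Lemma sum_sgn_Tm_norm t : inK t -> t != 0 -> \sum_y sgn (Tm (t * y ^+ q.+1)) = - q%:Z.
Proof.
move=> ht t0; rewrite (bigD1 0) //= expr0n /= mulr0 trace0 sgn0 sum_polar.
set r := t ^+ hq.
have hr : inK r by apply: inKX.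
have r0 : r != 0 by rewrite expf_neq0.
have hr2 : r ^+ 2 = t by rewrite /r -exprM mulnC -q_double; apply/eqP.
rewrite (eq_bigr (fun _ => -1)); last first.
  move=> u hu; rewrite (eq_bigr (fun s => sgn (Tm (s * r)))); last first.
    move=> s /andP[hs _]; rewrite exprMn (eqP hu) mulr1 exprS (eqP hs) -expr2.
    by rewrite -hr2 -exprMn Tm_sqr ?inKM // mulrC.
  by rewrite sum_nonzero_K sum_sgn_Tm // (negbTE r0) mul0r trace0 sgn0 sub0r.
by rewrite sum_inU_const; lia.
Qed.

Lemma sum_sgn_Tn_Tm_norm_shift c t : inK c -> inK t -> t != 0 ->
  \sum_x sgn (Tn (c * x)) * sgn (Tm (t * x ^+ q.+1)) =
  sgn (Tm (c * (c / t))) * \sum_y sgn (Tm (t * y ^+ q.+1)).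
Proof.
move=> hc ht t0; set e := c / t.
have he : inK e by apply: inKM => //; apply: inKV.
rewrite (reindex_inj (addIr e)) /= mulr_sumr; apply: eq_bigr => y _.
rewrite -!sgnD ?Tn_idem ?Tm_idem ?inKM ?inKV ?inK_norm //; congr sgn.
have -> : t * (y + e) ^+ q.+1 = t * y ^+ q.+1 + c * (y + y ^+ q) + c * e.
  by rewrite !exprS expr2nD // (eqP he) /e; field.
rewrite !traceD // mulrDr traceD // (Tn_K (inKM hc he)) addr0 Tn_mulK //.
set a := Tm (c * _); set b := Tm (t * _).
by rewrite (addrC b a) !addrA (addrr_pchar2 charF) add0r addrC.
Qed.

Lemma sum_sgn_Tn_Tm_norm c t : inK c -> inK t -> t != 0 ->
  \sum_(x | x != 0) sgn (Tn (c * x)) * sgn (Tm (t * x ^+ q.+1)) =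
  - q%:Z * sgn (Tm (c * (c / t))) - 1.
Proof.
move=> hc ht t0; rewrite sum_nonzero sum_sgn_Tn_Tm_norm_shift // sum_sgn_Tm_norm //.
by rewrite mulr0 trace0 expr0n /= mulr0 trace0 sgn0 mulr1 mulrN mulNr mulrC.
Qed.

Lemma sum_sgn_Tn_U_scaled c : q%:Z * \sum_(v | inU v) sgn (Tn (c * v)) =
  \sum_(t | inK t) sgn (Tm t) *
    \sum_(x | x != 0) sgn (Tn (c * x)) * sgn (Tm (t * x ^+ q.+1)).
Proof.
set SU := \sum_(v | inU v) _.
transitivity (\sum_(x | x != 0) sgn (Tn (c * x)) *
                \sum_(t | inK t) sgn (Tm (t * (x ^+ q.+1 + 1)))).
  rewrite (eq_bigr (fun x => if inU x then sgn (Tn (c * x)) * q%:Z else 0)); last first.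
    move=> x _; rewrite sum_sgn_Tm; last by apply: inKD; [apply: inK_norm|apply: inK1].
    rewrite addr_eq0 oppr_pchar2 // -/(inU x) cardK.
    by case: (inU x); rewrite ?mulr0.
  rewrite -big_mkcondr /= mulr_sumr (eq_bigl inU); last first.
    by move=> x; apply/andP/idP => [[]//|h]; split => //; apply: inU_neq0.
  by apply: eq_bigr => x _; rewrite mulrC.
under eq_bigr do rewrite mulr_sumr.
rewrite exchange_big /=; apply: eq_bigr => t ht; rewrite mulr_sumr.
apply: eq_bigr => x _; rewrite mulrDr mulr1 traceD // sgnD ?Tm_idem ?inKM ?inK_norm //.
ring.
Qed.

Lemma sum_sgn_Tm_Tn_Tm_norm c : inK c -> c != 0 ->
  \sum_(t | inK t) sgn (Tm t) *
    \sum_(x | x != 0) sgn (Tn (c * x)) * sgn (Tm (t * x ^+ q.+1)) =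
  - q%:Z * \sum_(t | inK t && (t != 0)) sgn (Tm (t + c * (c / t))).
Proof.
move=> hc c0; rewrite (bigD1 0) ?inK0 //= trace0 sgn0 mul1r.
under eq_bigr do rewrite mul0r trace0 sgn0 mulr1.
rewrite sum_nonzero sum_sgn_Tn // mulr0 trace0 sgn0 sub0r.
rewrite (eq_bigr (fun t => - q%:Z * sgn (Tm (t + c * (c / t))) - sgn (Tm t))); last first.
  move=> t /andP[ht t0]; rewrite sum_sgn_Tn_Tm_norm // traceD //.
  by rewrite sgnD ?Tm_idem ?inKM ?inKV //; ring.
rewrite sumrB -mulr_sumr.
have -> : \sum_(t | inK t && (t != 0)) sgn (Tm t) = -1.
  rewrite sum_nonzero_K trace0 sgn0 (eq_bigr (fun t => sgn (Tm (t * 1)))).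
    by rewrite sum_sgn_Tm ?inK1 // oner_eq0 sub0r.
  by move=> t _; rewrite mulr1.
by rewrite opprK addrC addrK.
Qed.

(* Substitute [t = r^-2]: [t + c^2/t = (c r + r^-1)^2]. *)
Lemma sum_Kx_sgn_Tm_inv c : inK c ->
  \sum_(t | inK t && (t != 0)) sgn (Tm (t + c * (c / t))) =
  \sum_(t | inK t && (t != 0)) sgn (Tm (c * t + t^-1)).
Proof.
move=> hc.
rewrite (reindex_onto (fun r => r^-1 ^+ 2) (fun t => t^-1 ^+ hq)) /=; last first.
  move=> t /andP[ht t0]; rewrite -exprVn invrK -exprM mulnC -q_double; exact/eqP.
apply: eq_big => r.
  case: (eqVneq r 0) => [->|r0]; first by rewrite invr0 expr0n /= eqxx !andbF.
  rewrite (expf_neq0 _ (invr_neq0 r0)) !andbT /=.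
  apply/andP/idP => [[h1 /eqP h2]|hr].
    by rewrite -h2; apply/inKX/inKV.
  split; first by apply/inKX/inKV.
  by rewrite -exprVn invrK -exprM -q_double.
move=> /andP[/andP[h1 h3] /eqP h2].
have hr : inK r by rewrite -h2; apply/inKX/inKV.
have r0 : r != 0 by apply: contraNneq h3 => ->; rewrite invr0 expr0n.
have -> : r^-1 ^+ 2 + c * (c / r^-1 ^+ 2) = (c * r + r^-1) ^+ 2.
  by rewrite sqrrD_char2 //; field; rewrite r0 oner_eq0.
by rewrite Tm_sqr //; apply: inKD; [apply: inKM|apply: inKV].
Qed.

Lemma sum_sgn_Tn_U c : inK c -> c != 0 ->
  \sum_(v | inU v) sgn (Tn (c * v)) =
  - \sum_(t | inK t && (t != 0)) sgn (Tm (c * t + t^-1)).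
Proof.
move=> hc c0; have q0 : q%:Z != 0 by have := q_gt1; lia.
apply: (mulfI q0); rewrite sum_sgn_Tn_U_scaled sum_sgn_Tm_Tn_Tm_norm //.
by rewrite sum_Kx_sgn_Tm_inv // mulNr mulrN.
Qed.


Section Walsh.
Variable f : F -> F.
Hypotheses (f0 : f 0 = 0) (f_idem : forall x, f x ^+ 2 = f x)
  (f_mulK : forall t x, inK t -> t != 0 -> x != 0 -> f (t * x) = f x).

Let SU := \sum_(u | inU u) sgn (f u).

Lemma walshE lam : walsh (2 * m) f lam =
  1 + \sum_(u | inU u) sgn (f u) *
        ((if lam * u + (lam * u) ^+ q == 0 then q%:Z else 0) - 1).
Proof.
rewrite /walsh (bigD1 0) //= f0 mulr0 trace0 add0r sgn0.
congr (1 + _); rewrite sum_polar; apply: eq_bigr => u hu.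
rewrite (eq_bigr (fun t => sgn (f u) * sgn (Tm (t * (lam * u + (lam * u) ^+ q)))));
  last first.
  move=> t /andP[ht t0]; rewrite (f_mulK ht t0 (inU_neq0 hu)) sgnD ?f_idem ?Tn_idem //.
  by rewrite mulrCA Tn_mulK.
by rewrite -mulr_sumr sum_nonzero_K sum_sgn_Tm ?inK_addXq // mul0r trace0 cardK sgn0.
Qed.

Lemma walsh0 : walsh (2 * m) f 0 = 1 + (q%:Z - 1) * SU.
Proof.
rewrite walshE /SU mulr_sumr; congr (1 + _); apply: eq_bigr => u _.
by rewrite mul0r expr0n expn_eq0 /= addr0 eqxx mulrC.
Qed.

Lemma addXq_eq0 lam u : lam != 0 -> inU u ->
  (lam * u + (lam * u) ^+ q == 0) = (u == (polarU lam)^-1).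
Proof.
move=> l0 hu; have u0 := inU_neq0 hu; have pu0 := polarU_neq0 l0.
rewrite addr_eq0 oppr_pchar2 // eq_sym -/(inK _).
apply/idP/eqP => [h|->]; last exact: polarK_inK.
have : inK ((lam * u) / polarK lam) by apply/inKM/inKV/polarK_inK.
have -> : (lam * u) / polarK lam = u * polarU lam.
  by rewrite /polarK; field; rewrite pu0 l0.
move=> /inK_inU_eq1 /(_ (inUM hu (polarU_inU l0))) hu1.
by apply: (mulIf pu0); rewrite hu1 mulVf.
Qed.

Lemma walsh_neq0 lam : lam != 0 ->
  walsh (2 * m) f lam = 1 - SU + q%:Z * sgn (f (polarU lam)^-1).
Proof.
move=> l0; rewrite walshE -addrA; congr (1 + _).
rewrite (eq_bigr (fun u => sgn (f u) * (if u == (polarU lam)^-1 then q%:Z else 0)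
                           - sgn (f u))); last first.
  by move=> u hu; rewrite addXq_eq0 // mulrBr mulr1.
rewrite sumrB addrC /SU; congr (_ + _).
rewrite (bigD1 _ (inUV (polarU_inU l0))) /= eqxx big1; first by rewrite addr0 mulrC.
by move=> u /andP[_ /negbTE->]; rewrite mulr0.
Qed.

Lemma sqr_q_int : q%:Z ^+ 2 = (2 ^ (2 * m))%N%:Z.
Proof. by rewrite -q_sqr PoszM expr2. Qed.

Lemma bent_of_sum_sgn_U : SU = 1 -> bent (2 * m) f.
Proof.
move=> SU1 lam; case: (eqVneq lam 0) => [->|l0].
  by rewrite walsh0 SU1 mulr1 addrC subrK sqr_q_int.
by rewrite walsh_neq0 // SU1 subrr add0r exprMn sgn_sqr mulr1 sqr_q_int.
Qed.

Lemma sum_sgn_U_of_bent : bent (2 * m) f -> SU = 1 \/ (q%:Z - 1) * SU = - (q%:Z + 1).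
Proof.
move=> /(_ 0); rewrite walsh0 -sqr_q_int => /eqP.
rewrite -subr_eq0 subr_sqr mulf_eq0 => /orP[] /eqP h; [left|right]; last by lia.
have q1 : q%:Z - 1 != 0 by rewrite subr_eq0; have := q_gt1; lia.
by apply: (mulfI q1); rewrite mulr1; lia.
Qed.

Lemma bent_iff_sum_sgn_U : (1 < m)%N -> bent (2 * m) f <-> SU = 1.
Proof.
move=> m_gt1; split; last exact: bent_of_sum_sgn_U.
have q4 : (4 <= q)%N by rewrite -[4%N]/(2 ^ 2)%N leq_exp2l.
case/sum_sgn_U_of_bent => // h; exfalso.
have : (0 <= SU) \/ (SU = -1) \/ (SU <= -2) by lia.
by case=> [|[]] hS; nia.
Qed.

End Walsh.

Section PowerSum.
Variables (s : int) (a abar : F) (k : nat).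
Hypotheses (q1_3 : (3 %| q.+1)%N) (s_coprime : coprimez s (q.+1)%:Z) (a_neq0 : a != 0)
  (abar_inK : abar ^+ q = abar) (a_polar : a = abar * xi ^+ k).

Local Notation d := (q.+1 %/ 3)%N.

Definition f x := if x == 0 then 0 else
  \sum_(1 <= i < d) Tn (a * x ^ ((3 * i%:Z + s) * (q%:Z - 1))).

Definition g v := if v ^+ 3 == 1 then 0 else Tn (a * v).

Lemma d_odd : odd d.
Proof.
have := divnK q1_3; move/(congr1 odd); rewrite oddM /= andbT => ->.
by rewrite q_double oddM.
Qed.

Lemma d_gt0 : (0 < d)%N.
Proof. by have := divnK q1_3; case: (d). Qed.

Lemma f0 : f 0 = 0. Proof. by rewrite /f eqxx. Qed.

Lemma f_idem x : f x ^+ 2 = f x.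
Proof.
rewrite /f; case: eqP => _; first by rewrite expr0n.
by rewrite -trace_sum // Tn_idem.
Qed.

Lemma f_mulK t x : inK t -> t != 0 -> x != 0 -> f (t * x) = f x.
Proof.
move=> ht t0 x0; rewrite /f mulf_eq0 (negbTE t0) (negbTE x0) /=.
apply: eq_bigr => i _; congr (Tn (a * _)).
have tE : t ^ ((3 * i%:Z + s) * (q%:Z - 1)) = 1.
  by rewrite mulrC -exprz_exp q_pred_int -exprnP inK_expr_pred // exp1rz.
by rewrite exprzMl ?unitfE // tE mul1r.
Qed.

Lemma exprz_s_cube_eq1 w : inU w -> ((w ^ s) ^+ 3 == 1) = (w ^+ 3 == 1).
Proof.
move=> hw; apply/idP/idP => h; last first.
  by rewrite exprnP exprzAC -exprnP (eqP h) exp1rz.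
have [a0 [b0 hab]] := Bezoutz s (q.+1)%:Z.
have -> : w = (w ^ s) ^ a0.
  rewrite exprz_exp -[in LHS](expr1z w) -(eqP s_coprime) -hab mulrC [b0 * _]mulrC.
  by rewrite (mulrC s) inU_exprzD_mul.
by rewrite exprnP exprzAC -exprnP (eqP h) exp1rz.
Qed.

(* With [w = u^(q-1)], [f u = Tr(a w^s sum_(1 <= i < d) w^(3i))] is a
   geometric sum of odd length in the cube root of unity [w^3]. *)
Lemma f_inU u : inU u -> f u = g (u ^ ((q.-1)%:Z * s)).
Proof.
move=> hu; rewrite /f (negbTE (inU_neq0 hu)).
set w := u ^+ q.-1.
have hw : inU w by rewrite /inU -exprM mulnC exprM (eqP hu) expr1n.
have w0 : w != 0 := inU_neq0 hw.
have uE i : u ^ ((3 * i%:Z + s) * (q%:Z - 1)) = (w ^+ 3) ^+ i * w ^ s.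
  rewrite mulrC -exprz_exp q_pred_int -exprnP -/w exprzDr ?unitfE //.
  by rewrite -exprM exprnP.
under eq_bigr do rewrite uE.
have -> : \sum_(1 <= i < d) Tn (a * ((w ^+ 3) ^+ i * w ^ s)) =
          Tn (a * w ^ s * \sum_(1 <= i < d) (w ^+ 3) ^+ i).
  rewrite mulr_sumr trace_sum //; apply: eq_bigr => i _.
  by rewrite -mulrA [_ * w ^ s]mulrC.
rewrite sum_expr_odd ?d_odd //; last by rewrite -exprM mulnC divnK // (eqP hw).
rewrite -exprz_exp -/w /g exprz_s_cube_eq1 //.
by case: (w ^+ 3 == 1); rewrite ?mulr0 ?trace0 ?mulr1.
Qed.

(* [u -> u^((q-1)s)] permutes [U]: [q-1 = -2] modulo [q+1] and [s] is a unit. *)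
Lemma sum_sgn_f_U : \sum_(u | inU u) sgn (f u) = \sum_(v | inU v) sgn (g v).
Proof.
rewrite (eq_bigr (fun u => sgn (g (u ^ ((q.-1)%:Z * s))))); last first.
  by move=> u hu; rewrite f_inU.
have [a0 [b0 hab]] := Bezoutz s (q.+1)%:Z; rewrite (eqP s_coprime) in hab.
set H := hq%:Z.
have qpred : (q.-1)%:Z = 2 * H - 1 by rewrite /H q_double; have := hq_gt0; lia.
have qsucc : (q.+1)%:Z = 2 * H + 1 by rewrite /H q_double; lia.
apply: (@reindex_inU_exprz _ _ (-(H + 1) * a0) (-(H + b0) + H * b0 * (2 * H + 1))).
rewrite qpred qsucc; rewrite qsucc in hab.
have -> : (2 * H - 1) * s * (-(H + 1) * a0) = -((2 * H - 1) * (H + 1)) * (a0 * s).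
  by ring.
have -> : a0 * s = 1 - b0 * (2 * H + 1).
  by apply: (addIr (b0 * (2 * H + 1))); rewrite hab; ring.
ring.
Qed.

Lemma xi_expr_inj i j : (i < q.+1)%N -> (j < q.+1)%N -> (xi ^+ i == xi ^+ j) = (i == j).
Proof. by move=> hi hj; rewrite (eq_prim_root_expr xi_prim) !modn_small. Qed.

Lemma omega_cube : (xi ^+ d) ^+ 3 = 1.
Proof. by rewrite -exprM divnK // prim_expr_order. Qed.

Lemma omega_sqr : (xi ^+ d) ^+ 2 = xi ^+ (2 * d).
Proof. by rewrite -exprM mulnC. Qed.

Lemma omega_neq1 : xi ^+ d != 1.
Proof.
rewrite -(expr0 xi) xi_expr_inj -?lt0n ?d_gt0 //.
by rewrite -(divnK q1_3); have := d_gt0; lia.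
Qed.

Lemma omega_sum : 1 + xi ^+ d + xi ^+ (2 * d) = 0.
Proof.
have : (xi ^+ d - 1) * (1 + xi ^+ d + (xi ^+ d) ^+ 2) = 0.
  have -> : (xi ^+ d - 1) * (1 + xi ^+ d + (xi ^+ d) ^+ 2) = (xi ^+ d) ^+ 3 - 1 by ring.
  by rewrite omega_cube subrr.
by move/eqP; rewrite mulf_eq0 subr_eq0 (negbTE omega_neq1) omega_sqr => /eqP.
Qed.

Lemma cube_eq1_mem v : (v ^+ 3 == 1) = (v \in [:: 1; xi ^+ d; xi ^+ (2 * d)]).
Proof.
rewrite !inE -omega_sqr; apply/idP/idP => [/eqP v3|]; last first.
  by case/or3P => /eqP->; rewrite ?expr1n ?omega_cube // exprAC omega_cube expr1n.
have : (v - 1) * (v - xi ^+ d) * (v - (xi ^+ d) ^+ 2) = 0.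
  have -> : (v - 1) * (v - xi ^+ d) * (v - (xi ^+ d) ^+ 2) =
           v ^+ 3 - (xi ^+ d) ^+ 3 - (1 + xi ^+ d + (xi ^+ d) ^+ 2) * (v ^+ 2 - xi ^+ d * v).
    by ring.
  by rewrite v3 omega_cube omega_sqr omega_sum mul0r subr0 subrr.
by move/eqP; rewrite !mulf_eq0 !subr_eq0 orbA.
Qed.

Lemma cube_roots_uniq : uniq [:: (1 : F); xi ^+ d; xi ^+ (2 * d)].
Proof.
have d3 := divnK q1_3; have := d_gt0.
by rewrite /= !inE -(expr0 xi) !xi_expr_inj; lia.
Qed.

Lemma sum_cube_roots (phi : F -> int) :
  \sum_(v | inU v && (v ^+ 3 == 1)) phi v = phi 1 + phi (xi ^+ d) + phi (xi ^+ (2 * d)).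
Proof.
rewrite (eq_bigl (mem [:: 1; xi ^+ d; xi ^+ (2 * d)])); last first.
  move=> v; rewrite /= -cube_eq1_mem; apply/andP/idP => [[]//|h]; split => //.
  by rewrite /inU -(divnK q1_3) mulnC exprM (eqP h) expr1n.
by rewrite -big_uniq ?cube_roots_uniq // !big_cons big_nil /= addr0 addrA.
Qed.

Lemma sum_sgn_Tn_aU : \sum_(v | inU v) sgn (Tn (a * v)) =
  (if m == 1%N then -1 else 1) - kloosterman m abar.
Proof.
have abar0 : abar != 0 by apply: contraNneq a_neq0 => e; rewrite a_polar e mul0r.
have xik : xi ^+ k \is a GRing.unit.
  by rewrite unitfE expf_neq0 // inU_neq0 // /inU prim_expr_order.
have -> : \sum_(v | inU v) sgn (Tn (a * v)) = \sum_(v | inU v) sgn (Tn (abar * v)).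
  rewrite [RHS](reindex_inj (mulrI xik)) /=; apply: eq_big => v.
    by rewrite /inU exprMn -exprM mulnC exprM (prim_expr_order xi_prim) expr1n mul1r.
  by rewrite a_polar mulrA.
by rewrite sum_sgn_Tn_U ?kloostermanE /inK ?abar_inK // opprD addrA subrr add0r.
Qed.
Lemma sum_sgn_f_U_kloosterman : \sum_(u | inU u) sgn (f u) =
  3 + ((if m == 1%N then -1 else 1) - kloosterman m abar)
    - (sgn (Tn a) + sgn (Tn (a * xi ^+ d)) + sgn (Tn (a * xi ^+ (2 * d)))).
Proof.
rewrite -sum_sgn_Tn_aU sum_sgn_f_U (bigID (fun v => v ^+ 3 == 1)) /=.
rewrite (eq_bigr (fun _ => 1)); last by move=> v /andP[_ h]; rewrite /g h sgn0.
rewrite sum_cube_roots (eq_bigr (fun v => sgn (Tn (a * v)))); last first.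
  by move=> v /andP[_ /negbTE h]; rewrite /g h.
rewrite [in RHS](bigID (fun v => v ^+ 3 == 1)) /= sum_cube_roots mulr1.
by ring.
Qed.

(* For [m = 1], [U] consists of the cube roots of unity and [f = 0]. *)
Lemma not_bent_f_m1 : m = 1%N ->
  ~ bent (2 * m) f /\
  kloosterman m abar <> 3 - (sgn (Tn a) + sgn (Tn (a * xi ^+ d)) + sgn (Tn (a * xi ^+ (2 * d)))).
Proof.
move=> m1; have q2 : q = 2%N by rewrite m1.
have m1b : (m == 1%N) = true by apply/eqP.
have := sum_sgn_Tn_aU; rewrite m1b.
rewrite (eq_bigl (fun v => inU v && (v ^+ 3 == 1))); last by move=> v; rewrite /inU q2 andbb.
rewrite sum_cube_roots mulr1 => hK.
have S3 : \sum_(u | inU u) sgn (f u) = 3 by rewrite sum_sgn_f_U_kloosterman m1b; lia.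
split; last by lia.
by case/(sum_sgn_U_of_bent f0 f_idem f_mulK); rewrite S3 // q2.
Qed.

Lemma bent_f_iff : (1 < m)%N ->
  bent (2 * m) f <->
  kloosterman m abar = 3 - (sgn (Tn a) + sgn (Tn (a * xi ^+ d)) + sgn (Tn (a * xi ^+ (2 * d)))).
Proof.
move=> m_gt1; have [bentS Sbent] := bent_iff_sum_sgn_U f0 f_idem f_mulK m_gt1.
have m1b : (m == 1%N) = false by apply/eqP; lia.
move: bentS Sbent; rewrite sum_sgn_f_U_kloosterman m1b => bentS Sbent.
by split => [/bentS|hK]; [lia | apply: Sbent; lia].
Qed.

Lemma Tn_cube_roots_sum : Tn a + Tn (a * xi ^+ d) + Tn (a * xi ^+ (2 * d)) = 0.
Proof. by rewrite -!traceD // -[a in a + _ + _]mulr1 -!mulrDr omega_sum mulr0 trace0. Qed.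

Lemma bent_f_kloosterman :
  (bent (2 * m) f <->
     kloosterman m abar = 3 - \sum_(j < 3) sgn (Tn (a * xi ^+ (j * d)))) /\
  (bent (2 * m) f ->
     if [&& Tn a == 0, Tn (a * xi ^+ d) == 0 & Tn (a * xi ^+ (2 * d)) == 0]
     then kloosterman m abar = 0 else kloosterman m abar = 4).
Proof.
rewrite !big_ord_recl big_ord0 /= mul0n expr0 mulr1 mul1n addr0 addrA.
case: (ltnP 1 m) => [m_gt1|m_le1]; last first.
  have [|not_bent not_kl] := not_bent_f_m1; first by lia.
  by split => // /not_bent.
split; first exact: bent_f_iff.
move=> /(bent_f_iff m_gt1) ->.
rewrite sgn_sum3 ?Tn_idem ?Tn_cube_roots_sum //.
by case: [&& _, _ & _].
Qed.

End PowerSum.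

End RootOfUnity.
End Subfield.

Theorem corollary5 (F : finFieldType) (m : nat) (s : int) (xi a abar : F) (k : nat) :
  (0 < m)%N ->
  (3 %| 2 ^ m + 1)%N ->
  #|F| = (2 ^ (2 * m))%N ->
  (2 \in [pchar F])%N ->
  coprimez s (2 ^ m + 1)%:Z ->
  (2 ^ m + 1).-primitive_root xi ->
  a != 0 ->
  abar ^+ (2 ^ m) = abar ->
  (k <= 2 ^ m)%N ->
  a = abar * xi ^+ k ->
  let f := fun x : F =>
    if x == 0 then 0
    else \sum_(1 <= i < (2 ^ m + 1) %/ 3)
           trace (2 * m) (a * x ^ ((3 * i%:Z + s) * ((2 ^ m)%:Z - 1))) in
  (bent (2 * m) f <->
     kloosterman m abar =
       3 - \sum_(j < 3) sgn (trace (2 * m) (a * xi ^+ (j * ((2 ^ m + 1) %/ 3))))) /\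
  (bent (2 * m) f ->
     if [&& trace (2 * m) a == 0,
            trace (2 * m) (a * xi ^+ ((2 ^ m + 1) %/ 3)) == 0 &
            trace (2 * m) (a * xi ^+ (2 * ((2 ^ m + 1) %/ 3))) == 0]
     then kloosterman m abar = 0
     else kloosterman m abar = 4).
Proof.
move=> m_gt0 q1_3 cardF charF s_coprime xi_prim a_neq0 abar_inK _ a_polar.
rewrite addn1 in q1_3 s_coprime xi_prim; rewrite !addn1.
exact: (bent_f_kloosterman m_gt0 cardF charF xi_prim q1_3 s_coprime a_neq0 abar_inK a_polar).
Qed.
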